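(* Let $n\ge4$, $0<\alpha_2,\alpha_3<1$, $\alpha_1=1-\alpha_2-\alpha_3$, $\lambda^*=\big(\frac{n-1+\alpha_1}{n},\frac{\alpha_2}{n},\frac{\alpha_3}{n}\big)$. Define $$\sigma_1=\sum_{i_1=0}^{n-4}\Big(\sum_{i_2=1}^{\lfloor (n-i_1-1)/2\rfloor}|l_{(i_1,i_2,n-i_1-i_2)}(\lambda^* )|+\frac{1-\varepsilon(i_1)}{2}\mathfrak{p}(i_1)\Big),$$ $$\sigma_2=\sum_{i_1=0}^{n-4}\Big(\sum_{i_3=1}^{\lfloor (n-i_1-1)/2\rfloor}|l_{(i_1,n-i_1-i_3,i_3)}(\lambda^* )|+\frac{1-\varepsilon(i_1)}{2}\mathfrak{p}(i_1)\Big).$$ Then for $s=1,2$, $$\sigma_s\le\frac{C_0}{e(\ln n-1)}\sum_{i_1=0}^{n-4}\binom{n}{n-i_1}\frac{1}{n-i_1-1},\qquad C_0=\frac{(\ln2)^2+12\ln2+28}{4\ln2+12}<2.5.$$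
   Context: For an integer $n\ge1$ let $I=\{i=(i_1,i_2,i_3)\in\mathbb{Z}_+^3: i_1+i_2+i_3=n\}$ and $l_i(\lambda)=\prod_{s=1}^{3}\frac{1}{i_s!}\prod_{t=0}^{i_s-1}(n\lambda_s-t)$ for $\lambda=(\lambda_1,\lambda_2,\lambda_3)$ (Lagrange fundamental polynomials for the equally spaced nodes $i/n$ of a triangle in barycentric coordinates). For an integer $i_1$, $\varepsilon(i_1)=0$ if $n-i_1$ is even and $\varepsilon(i_1)=1$ otherwise; when $n-i_1$ is even, $\mathfrak{p}(i_1)=|l_i(\lambda^* )|$ with $i=\big(i_1,\frac{n-i_1}{2},\frac{n-i_1}{2}\big)$ (the term with factor $1-\varepsilon(i_1)=0$ is absent when $n-i_1$ is odd). *)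

From Stdlib Require Import Reals Lra Lia List Arith.
Open Scope R_scope.

(* rsum lo hi f = sum_{i = lo}^{hi} f i  (empty, i.e. 0, if hi < lo) *)
Definition rsum (lo hi : nat) (f : nat -> R) : R :=
  fold_right (fun i acc => f i + acc) 0 (List.seq lo (S hi - lo)).

Definition rprod (lo hi : nat) (f : nat -> R) : R :=
  fold_right (fun i acc => f i * acc) 1 (List.seq lo (S hi - lo)).

Definition lfactor (k : nat) (x : R) : R :=
  / INR (fact k) * rprod 0 (k - 1) (fun t => x - INR t) .

(* Careful: for k = 0 the product must be empty. *)
Definition lfac (k : nat) (x : R) : R :=
  match k with
  | O => 1
  | S _ => lfactor k x
  end.

(* Lagrange fundamental polynomial l_i(lambda), i = (i1,i2,i3), nodes i/n *)
Definition lagr (n i1 i2 i3 : nat) (l1 l2 l3 : R) : R :=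
  lfac i1 (INR n * l1) * lfac i2 (INR n * l2) * lfac i3 (INR n * l3).

Definition eps (n i1 : nat) : R := if Nat.even (n - i1) then 0 else 1.

(* pfrak(i1) = |l_{(i1,(n-i1)/2,(n-i1)/2)}(lambda)| (only used with factor
   1 - eps(i1), which vanishes when n - i1 is odd) *)
Definition pfrak (n i1 : nat) (l1 l2 l3 : R) : R :=
  Rabs (lagr n i1 ((n - i1) / 2) ((n - i1) / 2) l1 l2 l3).

Definition sigma1 (n : nat) (l1 l2 l3 : R) : R :=
  rsum 0 (n - 4) (fun i1 =>
    rsum 1 ((n - i1 - 1) / 2) (fun i2 => Rabs (lagr n i1 i2 (n - i1 - i2) l1 l2 l3))
    + (1 - eps n i1) / 2 * pfrak n i1 l1 l2 l3).

Definition sigma2 (n : nat) (l1 l2 l3 : R) : R :=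
  rsum 0 (n - 4) (fun i1 =>
    rsum 1 ((n - i1 - 1) / 2) (fun i3 => Rabs (lagr n i1 (n - i1 - i3) i3 l1 l2 l3))
    + (1 - eps n i1) / 2 * pfrak n i1 l1 l2 l3).

Definition C0 : R := ((ln 2) ^ 2 + 12 * ln 2 + 28) / (4 * ln 2 + 12).

Definition bound_rhs (n : nat) : R :=
  C0 / (exp 1 * (ln (INR n) - 1)) *
  rsum 0 (n - 4) (fun i1 => Binomial.C n (n - i1) * / INR (n - i1 - 1)).

(* At λ^* the Lagrange polynomial factors as
   |l_(i1,i2,i3)| = |lfac i1 (n - α2 - α3)| · |lfac i2 α2| · |lfac i3 α3|,
   where lfac k a is the generalized binomial coefficient (a choose k).  For
   0 < a < 1 the sums Σ_{k=1}^{J} |lfac k a| telescope and stay below 1, so in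
   row i1 (m = n - i1) the middle factors sum to at most 1.  Since the last index
   k is at least m/2, the product of the two outer factors is at most
   (2/m) C(n,i1) / (e (ln n - 1)); finally 2/m ≤ C0/(m-1) because C0 ≥ 2. *)

From Stdlib Require Import Reals Lra Lia List Arith.
From Coquelicot Require Import Rcomplements.
Open Scope R_scope.

Lemma rsum_le (lo hi : nat) (f g : nat -> R) :
  (forall i, (lo <= i <= hi)%nat -> f i <= g i) -> rsum lo hi f <= rsum lo hi g.
Proof.
  intros Hfg; unfold rsum.
  assert (Hl : forall i, In i (seq lo (S hi - lo)) -> f i <= g i)
    by (intros i Hi; apply in_seq in Hi; apply Hfg; lia).
  revert Hl; induction (seq lo (S hi - lo)) as [|x l IH]; intros Hl; simpl; [lra|].
  apply Rplus_le_compat; [apply Hl; left; reflexivity|].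
  apply IH; intros i Hi; apply Hl; right; exact Hi.
Qed.

Lemma rsum_ext (lo hi : nat) (f g : nat -> R) :
  (forall i, (lo <= i <= hi)%nat -> f i = g i) -> rsum lo hi f = rsum lo hi g.
Proof.
  intros Hfg; apply Rle_antisym; apply rsum_le; intros i Hi; rewrite Hfg by exact Hi; lra.
Qed.

Lemma rsum_mult_l (c : R) (lo hi : nat) (f : nat -> R) :
  c * rsum lo hi f = rsum lo hi (fun i => c * f i).
Proof.
  unfold rsum; induction (seq lo (S hi - lo)) as [|x l IH]; simpl; [ring|].
  rewrite <- IH; ring.
Qed.

Lemma rsum_empty (lo hi : nat) (f : nat -> R) : (hi < lo)%nat -> rsum lo hi f = 0.
Proof. intros H; unfold rsum; replace (S hi - lo)%nat with 0%nat by lia; reflexivity. Qed.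

Lemma rsum_Sr (lo hi : nat) (f : nat -> R) :
  (lo <= S hi)%nat -> rsum lo (S hi) f = rsum lo hi f + f (S hi).
Proof.
  intros H; unfold rsum.
  replace (S (S hi) - lo)%nat with (S (S hi - lo)) by lia.
  rewrite seq_S; replace (lo + (S hi - lo))%nat with (S hi) by lia.
  induction (seq lo (S hi - lo)) as [|x l IH]; simpl; [ring|].
  rewrite IH; ring.
Qed.

Lemma rprod_Sr (lo hi : nat) (f : nat -> R) :
  (lo <= S hi)%nat -> rprod lo (S hi) f = rprod lo hi f * f (S hi).
Proof.
  intros H; unfold rprod.
  replace (S (S hi) - lo)%nat with (S (S hi - lo)) by lia.
  rewrite seq_S; replace (lo + (S hi - lo))%nat with (S hi) by lia.
  induction (seq lo (S hi - lo)) as [|x l IH]; simpl; [ring|].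
  rewrite IH; ring.
Qed.

Lemma lfac_S (k : nat) (x : R) : lfac (S k) x = lfac k x * (x - INR k) / INR (S k).
Proof.
  destruct k as [|k]; unfold lfac, lfactor.
  - unfold rprod; simpl; field.
  - replace (S (S k) - 1)%nat with (S k) by lia.
    replace (S k - 1)%nat with k by lia.
    rewrite rprod_Sr by lia.
    change (fact (S (S k))) with (S (S k) * fact (S k))%nat; rewrite mult_INR.
    assert (INR (fact (S k)) <> 0) by apply INR_fact_neq_0.
    assert (INR (S (S k)) <> 0) by (apply not_0_INR; lia).
    field; auto.
Qed.

Lemma binom_pos (n i : nat) : 0 < Binomial.C n i.
Proof.
  unfold Binomial.C.
  pose proof (INR_fact_lt_0 n); pose proof (INR_fact_lt_0 i); pose proof (INR_fact_lt_0 (n - i)).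
  apply Rdiv_lt_0_compat; [|apply Rmult_lt_0_compat]; assumption.
Qed.

Lemma binom_n_0 (n : nat) : Binomial.C n 0 = 1.
Proof.
  unfold Binomial.C; rewrite Nat.sub_0_r; simpl.
  field; apply INR_fact_neq_0.
Qed.

Lemma exp_le (x y : R) : x <= y -> exp x <= exp y.
Proof. intros [Hxy | ->]; [left; apply exp_increasing; exact Hxy | right; reflexivity]. Qed.

Lemma exp_mult_INR (k : nat) (x : R) : exp (INR k * x) = exp x ^ k.
Proof.
  induction k as [|k IH]; [simpl; rewrite Rmult_0_l; apply exp_0|].
  rewrite S_INR, Rmult_plus_distr_r, Rmult_1_l, exp_plus, IH; simpl; ring.
Qed.

Lemma pow_le_exp (x : R) (k : nat) : 0 <= 1 + x -> (1 + x) ^ k <= exp (INR k * x).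
Proof.
  intros Hx; rewrite exp_mult_INR; apply pow_incr; split; [exact Hx | apply exp_ineq1_le].
Qed.

Lemma exp_1_ge : 5 / 2 <= exp 1.
Proof.
  pose proof (pow_le_exp (1 / 8) 8 ltac:(lra)) as H.
  replace (INR 8 * (1 / 8)) with 1 in H by (simpl; field).
  simpl in H; lra.
Qed.

Lemma ln_2_lt : ln 2 < 73 / 100.
Proof.
  pose proof (pow_le_exp (73 / 800) 8 ltac:(lra)) as H.
  replace (INR 8 * (73 / 800)) with (73 / 100) in H by (simpl; field).
  rewrite <- (ln_exp (73 / 100)); apply ln_increasing; [lra|].
  simpl in H; lra.
Qed.

Lemma ln_gt_1 (x : R) : 3 < x -> 1 < ln x.
Proof.
  intros Hx; rewrite <- ln_exp at 1; apply ln_increasing; [apply exp_pos|].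
  pose proof exp_le_3; lra.
Qed.

Lemma ln_succ_le (x : R) : 0 < x -> ln (x + 1) <= ln x + / x.
Proof.
  intros Hx; rewrite <- (ln_exp (ln x + / x)); apply ln_le; [lra|].
  rewrite exp_plus, exp_ln by exact Hx.
  pose proof (exp_ineq1_le (/ x)).
  replace (x + 1) with (x * (1 + / x)) by (field; lra).
  apply Rmult_le_compat_l; lra.
Qed.

Lemma mult_exp_opp_le (x : R) : x * exp (- x) <= / exp 1.
Proof.
  pose proof (exp_ineq1_le (x - 1)); pose proof (exp_pos 1).
  assert (Hprod : exp (x - 1) * (exp (- x) * exp 1) = 1)
    by (rewrite <- !exp_plus, <- exp_0; f_equal; ring).
  apply (Rmult_le_reg_r (exp 1)); [assumption|].
  rewrite Rinv_l, Rmult_assoc by lra.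
  apply Rle_trans with (exp (x - 1) * (exp (- x) * exp 1)); [|lra].
  apply Rmult_le_compat_r; [left; apply Rmult_lt_0_compat; [apply exp_pos | assumption] | lra].
Qed.

Lemma mult_exp_opp_mult_le (b L c : R) :
  0 < c <= L -> b * exp (- (b * L)) <= / (exp 1 * c).
Proof.
  intros Hc; pose proof (mult_exp_opp_le (b * L)); pose proof (exp_pos 1).
  rewrite Rinv_mult; apply Rle_trans with (/ exp 1 * / L).
  - apply (Rmult_le_reg_r L); [lra|].
    rewrite (Rmult_assoc (/ exp 1)), Rinv_l, Rmult_1_r by lra.
    replace (b * exp (- (b * L)) * L) with (b * L * exp (- (b * L))) by ring; assumption.
  - apply Rmult_le_compat_l; [left; apply Rinv_0_lt_compat; lra|].
    apply Rinv_le_contravar; lra.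
Qed.

Lemma ln_gap (N M K : R) :
  0 < N -> 0 <= M <= 2 * K -> 2 <= K -> ln N - 1 <= ln (N + 1) - ln (M + 1) + ln K.
Proof.
  intros HN HM HK.
  assert (ln N <= ln (N + 1)) by (apply ln_le; lra).
  assert (ln (M + 1) <= ln K + 1).
  { replace (ln K + 1) with (ln (K * exp 1))
      by (rewrite ln_mult, ln_exp; [ring | lra | apply exp_pos]).
    pose proof exp_1_ge; apply ln_le; nra. }
  lra.
Qed.

Lemma C0_ge_2 : 2 <= C0.
Proof.
  unfold C0; pose proof ln_lt_2.
  apply (Rmult_le_reg_r (4 * ln 2 + 12)); [lra|].
  unfold Rdiv; rewrite Rmult_assoc, Rinv_l by lra; nra.
Qed.

(* C0 < 5/2 amounts to (ln 2)^2 + 2 ln 2 - 2 < 0, i.e. ln 2 < √3 - 1 ≈ 0.732. *)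
Lemma C0_lt_5_2 : C0 < 5 / 2.
Proof.
  unfold C0; pose proof ln_lt_2; pose proof ln_2_lt.
  apply (Rmult_lt_reg_r (4 * ln 2 + 12)); [lra|].
  unfold Rdiv; rewrite (Rmult_assoc (_ + _)), Rinv_l by lra; nra.
Qed.

Definition abs_lfac (a : R) (k : nat) : R := Rabs (lfac k a).

Lemma abs_lfac_ge0 (a : R) (k : nat) : 0 <= abs_lfac a k.
Proof. apply Rabs_pos. Qed.

Lemma abs_lfac_1 (a : R) : 0 <= a -> abs_lfac a 1 = a.
Proof.
  intros Ha; unfold abs_lfac; rewrite lfac_S; simpl.
  rewrite Rabs_pos_eq; lra.
Qed.

Lemma abs_lfac_S (a : R) (k : nat) :
  a <= 1 -> (1 <= k)%nat -> abs_lfac a (S k) = abs_lfac a k * (INR k - a) / INR (S k).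
Proof.
  intros Ha Hk; unfold abs_lfac; rewrite lfac_S; unfold Rdiv.
  assert (1 <= INR k) by (apply (le_INR 1); exact Hk).
  assert (0 < INR (S k)) by (apply lt_0_INR; lia).
  rewrite !Rabs_mult, Rabs_inv, (Rabs_pos_eq (INR (S k))), (Rabs_left1 (a - INR k)) by lra.
  ring.
Qed.

(* The partial sums telescope since (k+1) |lfac (k+1) a| = (k - a) |lfac k a|. *)
Lemma abs_lfac_partial_sum (a : R) (J : nat) :
  0 < a <= 1 -> rsum 1 J (abs_lfac a) = 1 - INR (S J) * abs_lfac a (S J) / a.
Proof.
  intros Ha; induction J as [|J IH].
  - rewrite rsum_empty, abs_lfac_1 by (lia || lra); simpl; field; lra.
  - rewrite rsum_Sr, IH, (abs_lfac_S a (S J)) by (lia || lra).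
    assert (0 < INR (S (S J))) by (apply lt_0_INR; lia).
    field; lra.
Qed.

Lemma abs_lfac_sum_le_1 (a : R) (J : nat) : 0 < a <= 1 -> rsum 1 J (abs_lfac a) <= 1.
Proof.
  intros Ha; rewrite abs_lfac_partial_sum by exact Ha.
  assert (0 <= INR (S J) * abs_lfac a (S J) / a); [|lra].
  apply Rmult_le_pos; [apply Rmult_le_pos; [apply pos_INR | apply abs_lfac_ge0]|].
  left; apply Rinv_0_lt_compat; lra.
Qed.

(* k |lfac k a| ≤ a k^(-a): each step multiplies by 1 - a/k ≤ e^(-a/k), and
   ln (k+1) ≤ ln k + 1/k. *)
Lemma abs_lfac_decay (a : R) (k : nat) :
  0 <= a <= 1 -> (1 <= k)%nat -> INR k * abs_lfac a k <= a * exp (- a * ln (INR k)).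
Proof.
  intros Ha Hk; induction k as [|k IH]; [lia|].
  destruct k as [|k].
  - simpl INR; rewrite abs_lfac_1, ln_1, Rmult_0_r, exp_0 by lra; lra.
  - rewrite abs_lfac_S by (lra || lia).
    specialize (IH ltac:(lia)).
    set (K := INR (S k)) in *.
    assert (HK : 1 <= K) by (apply (le_INR 1); lia).
    replace (INR (S (S k))) with (K + 1) by (unfold K; rewrite (S_INR (S k)); ring).
    replace ((K + 1) * (abs_lfac a (S k) * (K - a) / (K + 1)))
      with (K * abs_lfac a (S k) * (1 - a / K)) by (field; lra).
    assert (Hstep : 0 <= 1 - a / K <= exp (- (a / K))).
    { pose proof (proj1 (Rdiv_le_1 a K ltac:(lra)) ltac:(lra)).
      split; [lra | apply exp_ineq1_le]. }
    assert (Hln : - a * ln K + - (a / K) <= - a * ln (K + 1)).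
    { pose proof (ln_succ_le K ltac:(lra)); unfold Rdiv; nra. }
    apply Rle_trans with (a * exp (- a * ln K) * exp (- (a / K))).
    + apply Rmult_le_compat; try lra.
      apply Rmult_le_pos; [lra | apply abs_lfac_ge0].
    + rewrite Rmult_assoc, <- exp_plus; apply Rmult_le_compat_l; [lra|].
      apply exp_le; exact Hln.
Qed.

Lemma sub_le_mult_exp_ln_ratio (M b s : R) :
  0 < M -> 0 <= b <= s -> M - s <= M * exp (- b * (ln (M + 1) - ln M)).
Proof.
  intros HM Hbs.
  set (d := ln (M + 1) - ln M).
  assert (Hd : M * d <= 1).
  { pose proof (ln_succ_le M HM).
    apply Rle_trans with (M * / M); [apply Rmult_le_compat_l; unfold d; lra|].
    rewrite Rinv_r; lra. }
  pose proof (exp_ineq1_le (- b * d)).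
  apply Rle_trans with (M * (1 + - b * d)); [nra|].
  apply Rmult_le_compat_l; lra.
Qed.

Lemma lfac_shift_bound (n i : nat) (b s : R) :
  (i + 2 <= n)%nat -> 0 < b <= s -> s < 2 ->
  0 <= lfac i (INR n - s) <=
  Binomial.C n i * exp (- b * (ln (INR n + 1) - ln (INR (n - i) + 1))).
Proof.
  intros Hn Hbs Hs; induction i as [|i IH].
  - rewrite binom_n_0, Nat.sub_0_r, Rminus_diag, Rmult_0_r, exp_0; simpl; lra.
  - destruct IH as [H0 H1]; [lia|].
    assert (HM : INR (n - S i) + 1 = INR (n - i)) by (rewrite <- S_INR; f_equal; lia).
    assert (Hx : INR n - s - INR i = INR (n - i) - s) by (rewrite minus_INR by lia; ring).
    rewrite lfac_S, pascal_step3, HM, Hx by lia.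
    set (M := INR (n - i)) in *; set (L := ln (INR n + 1)) in *.
    assert (HM3 : 3 <= M) by (unfold M; replace 3 with (INR 3) by (simpl; ring); apply le_INR; lia).
    assert (Hk : 0 < INR (S i)) by (apply lt_0_INR; lia).
    pose proof (sub_le_mult_exp_ln_ratio M b s ltac:(lra) ltac:(lra)) as Hshift.
    replace (exp (- b * (L - ln M)))
      with (exp (- b * (L - ln (M + 1))) * exp (- b * (ln (M + 1) - ln M)))
      by (rewrite <- exp_plus; f_equal; ring).
    split.
    + apply Rmult_le_pos; [apply Rmult_le_pos; lra | left; apply Rinv_0_lt_compat; lra].
    + replace (M / INR (S i) * Binomial.C n i
                 * (exp (- b * (L - ln (M + 1))) * exp (- b * (ln (M + 1) - ln M))))
        with (Binomial.C n i * exp (- b * (L - ln (M + 1)))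
                * (M * exp (- b * (ln (M + 1) - ln M))) / INR (S i)) by (field; lra).
      apply Rmult_le_compat_r; [left; apply Rinv_0_lt_compat; lra|].
      apply Rmult_le_compat; lra.
Qed.

Definition row_term (n i1 : nat) (a b : R) (j : nat) : R :=
  Rabs (lfac i1 (INR n - (a + b))) * abs_lfac a j * abs_lfac b (n - i1 - j).

Definition row_sum (n i1 : nat) (a b : R) : R :=
  rsum 1 ((n - i1 - 1) / 2) (row_term n i1 a b)
  + (1 - eps n i1) / 2 * row_term n i1 a b ((n - i1) / 2).

Lemma row_term_ge0 (n i1 : nat) (a b : R) (j : nat) : 0 <= row_term n i1 a b j.
Proof.
  unfold row_term; pose proof (abs_lfac_ge0 a j); pose proof (abs_lfac_ge0 b (n - i1 - j)).
  pose proof (Rabs_pos (lfac i1 (INR n - (a + b)))).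
  apply Rmult_le_pos; [apply Rmult_le_pos|]; assumption.
Qed.

(* The first factor decays like ((m+1)/(n+1))^b and the last like k^(-b)/k; since
   k ≥ m/2 the two powers combine into e^(-b L) with L ≥ ln n - 1. *)
Lemma outer_factors_le (n i1 k : nat) (a b : R) :
  (i1 + 4 <= n)%nat -> 0 < a < 1 -> 0 < b < 1 -> (n - i1 <= 2 * k)%nat ->
  Rabs (lfac i1 (INR n - (a + b))) * abs_lfac b k <=
  Binomial.C n (n - i1) / (exp 1 * (ln (INR n) - 1)) * (2 / INR (n - i1)).
Proof.
  intros Hi1 Ha Hb Hk.
  destruct (lfac_shift_bound n i1 b (a + b)) as [F0 F1]; [lia | lra | lra |].
  rewrite Rabs_pos_eq by exact F0; rewrite <- pascal_step1 by lia.
  pose proof (abs_lfac_decay b k ltac:(lra) ltac:(lia)) as Hdecay.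
  set (M := INR (n - i1)) in *; set (K := INR k) in *.
  assert (HM : 4 <= M) by (unfold M; replace 4 with (INR 4) by (simpl; ring); apply le_INR; lia).
  assert (HMK : M <= 2 * K)
    by (unfold M, K; replace 2 with (INR 2) by (simpl; ring); rewrite <- mult_INR; apply le_INR; lia).
  assert (Hn : 4 <= INR n) by (replace 4 with (INR 4) by (simpl; ring); apply le_INR; lia).
  pose proof (ln_gt_1 (INR n) ltac:(lra)) as Hln.
  set (L := ln (INR n + 1) - ln (M + 1) + ln K).
  assert (HL : ln (INR n) - 1 <= L) by (apply ln_gap; lra).
  pose proof (mult_exp_opp_mult_le b L (ln (INR n) - 1) ltac:(lra)) as Hpeak.
  set (C := Binomial.C n i1); pose proof (binom_pos n i1) as HC; fold C in HC.
  set (E := exp (- b * (ln (INR n + 1) - ln (M + 1)))) in *.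
  assert (HEK : E * exp (- b * ln K) = exp (- (b * L)))
    by (unfold E, L; rewrite <- exp_plus; f_equal; ring).
  assert (HQb : abs_lfac b k <= / K * (b * exp (- b * ln K))).
  { apply (Rmult_le_reg_l K); [lra|].
    rewrite <- Rmult_assoc, Rinv_r, Rmult_1_l by lra; exact Hdecay. }
  apply Rle_trans with (C * E * (/ K * (b * exp (- b * ln K)))).
  { apply Rmult_le_compat; [exact F0 | apply abs_lfac_ge0 | exact F1 | exact HQb]. }
  replace (C * E * (/ K * (b * exp (- b * ln K)))) with (C * / K * (b * exp (- (b * L))))
    by (rewrite <- HEK; ring).
  assert (HKM : / K <= 2 / M).
  { apply (Rmult_le_reg_r (K * M)); [nra|]. unfold Rdiv; field_simplify; lra. }
  replace (C / (exp 1 * (ln (INR n) - 1)) * (2 / M))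
    with (C * (2 / M) * / (exp 1 * (ln (INR n) - 1))) by (unfold Rdiv; ring).
  pose proof (exp_pos (- (b * L))).
  apply Rmult_le_compat; [| nra | apply Rmult_le_compat_l; lra | exact Hpeak].
  apply Rmult_le_pos; [lra | left; apply Rinv_0_lt_compat; lra].
Qed.

Lemma row_term_le (n i1 j : nat) (a b : R) :
  (i1 + 4 <= n)%nat -> 0 < a < 1 -> 0 < b < 1 -> (2 * j <= n - i1)%nat ->
  row_term n i1 a b j <=
  Binomial.C n (n - i1) / (exp 1 * (ln (INR n) - 1)) * (2 / INR (n - i1)) * abs_lfac a j.
Proof.
  intros Hi1 Ha Hb Hj; unfold row_term.
  rewrite Rmult_assoc, (Rmult_comm (abs_lfac a j)), <- Rmult_assoc.
  apply Rmult_le_compat_r; [apply abs_lfac_ge0 | apply outer_factors_le; (lia || lra)].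
Qed.

Lemma even_half_eq_S (m : nat) : Nat.even m = true -> (0 < m)%nat -> (m / 2 = S ((m - 1) / 2))%nat.
Proof.
  intros Hev Hm; apply Nat.even_spec in Hev as [h ->].
  rewrite (Nat.mul_comm 2 h), Nat.div_mul by lia.
  rewrite <- (Nat.div_unique (h * 2 - 1) 2 (h - 1) 1) by lia; lia.
Qed.

Lemma even_sub_half (m : nat) : Nat.even m = true -> (m - m / 2 = m / 2)%nat.
Proof.
  intros Hev; apply Nat.even_spec in Hev as [h ->].
  rewrite (Nat.mul_comm 2 h), Nat.div_mul by lia; lia.
Qed.

Lemma row_sum_le (n i1 : nat) (a b : R) :
  (i1 + 4 <= n)%nat -> 0 < a < 1 -> 0 < b < 1 ->
  row_sum n i1 a b <=
  C0 / (exp 1 * (ln (INR n) - 1)) * (Binomial.C n (n - i1) * / INR (n - i1 - 1)).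
Proof.
  intros Hi1 Ha Hb; unfold row_sum.
  set (J := ((n - i1 - 1) / 2)%nat).
  assert (HJ : (2 * J <= n - i1 - 1)%nat) by apply Nat.Div0.mul_div_le.
  set (M := INR (n - i1)).
  assert (HM : 4 <= M) by (unfold M; replace 4 with (INR 4) by (simpl; ring); apply le_INR; lia).
  assert (Hln : 1 < ln (INR n)).
  { apply ln_gt_1; replace 3 with (INR 3) by (simpl; ring); apply lt_INR; lia. }
  set (B := Binomial.C n (n - i1) / (exp 1 * (ln (INR n) - 1))).
  assert (HB : 0 < B).
  { pose proof (binom_pos n (n - i1)); pose proof exp_1_ge.
    apply Rdiv_lt_0_compat; [assumption | apply Rmult_lt_0_compat; lra]. }
  set (D := B * (2 / M)).
  assert (HD : 0 < D) by (apply Rmult_lt_0_compat; [exact HB | apply Rdiv_lt_0_compat; lra]).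
  assert (Hterms : rsum 1 J (row_term n i1 a b) <= D * rsum 1 J (abs_lfac a)).
  { rewrite rsum_mult_l; apply rsum_le; intros j Hj; apply row_term_le; (lia || lra). }
  (* For even n - i1 the midpoint is the term of index J + 1. *)
  assert (Hmid : (1 - eps n i1) / 2 * row_term n i1 a b ((n - i1) / 2) <= D * abs_lfac a (S J)).
  { pose proof (row_term_ge0 n i1 a b ((n - i1) / 2)); pose proof (abs_lfac_ge0 a (S J)).
    unfold eps; destruct (Nat.even (n - i1)) eqn:Hev; [|nra].
    pose proof (Nat.Div0.mul_div_le (n - i1) 2).
    assert (Hhalf : ((n - i1) / 2 = S J)%nat) by (apply even_half_eq_S; [exact Hev | lia]).
    rewrite Hhalf in *.
    assert (Hlast : row_term n i1 a b (S J) <= D * abs_lfac a (S J))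
      by (apply row_term_le; (lia || lra)).
    lra. }
  assert (Hsum : rsum 1 J (abs_lfac a) + abs_lfac a (S J) <= 1)
    by (rewrite <- rsum_Sr by lia; apply abs_lfac_sum_le_1; lra).
  assert (Hratio : 2 / M <= C0 / (M - 1)).
  { pose proof C0_ge_2; apply Rle_trans with (2 / (M - 1)).
    - apply Rmult_le_compat_l; [lra | apply Rinv_le_contravar; lra].
    - apply Rmult_le_compat_r; [left; apply Rinv_0_lt_compat|]; lra. }
  replace (INR (n - i1 - 1)) with (M - 1)
    by (unfold M; rewrite (minus_INR (n - i1) 1) by lia; reflexivity).
  replace (C0 / (exp 1 * (ln (INR n) - 1)) * (Binomial.C n (n - i1) * / (M - 1)))
    with (B * (C0 / (M - 1))) by (unfold B, Rdiv; ring).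
  apply Rle_trans with D; [nra|].
  apply Rmult_le_compat_l; lra.
Qed.

Lemma rsum_row_sum_le (n : nat) (a b : R) :
  (4 <= n)%nat -> 0 < a < 1 -> 0 < b < 1 ->
  rsum 0 (n - 4) (fun i1 => row_sum n i1 a b) <= bound_rhs n.
Proof.
  intros Hn Ha Hb; unfold bound_rhs; rewrite rsum_mult_l.
  apply rsum_le; intros i1 Hi1; apply row_sum_le; (lia || assumption).
Qed.

Section AtLambdaStar.

Variables (n : nat) (l1 l2 l3 a b : R).
Hypotheses (E1 : INR n * l1 = INR n - (a + b)) (E2 : INR n * l2 = a) (E3 : INR n * l3 = b).

Lemma abs_lagr_factor (i1 i2 i3 : nat) :
  Rabs (lagr n i1 i2 i3 l1 l2 l3)
  = Rabs (lfac i1 (INR n - (a + b))) * abs_lfac a i2 * abs_lfac b i3.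
Proof. unfold lagr, abs_lfac; rewrite E1, E2, E3, !Rabs_mult; reflexivity. Qed.

Lemma sigma1_eq_rsum_row_sum : sigma1 n l1 l2 l3 = rsum 0 (n - 4) (fun i1 => row_sum n i1 a b).
Proof.
  unfold sigma1, row_sum; apply rsum_ext; intros i1 _; f_equal.
  - apply rsum_ext; intros i2 _; apply abs_lagr_factor.
  - unfold pfrak, row_term, eps; rewrite abs_lagr_factor.
    destruct (Nat.even (n - i1)) eqn:Hev; [rewrite (even_sub_half _ Hev); ring | lra].
Qed.

Lemma sigma2_eq_rsum_row_sum : sigma2 n l1 l2 l3 = rsum 0 (n - 4) (fun i1 => row_sum n i1 b a).
Proof.
  unfold sigma2, row_sum; apply rsum_ext; intros i1 _; f_equal.
  - apply rsum_ext; intros i3 _; unfold row_term; rewrite abs_lagr_factor, (Rplus_comm b a); ring.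
  - unfold pfrak, row_term, eps; rewrite abs_lagr_factor, (Rplus_comm b a).
    destruct (Nat.even (n - i1)) eqn:Hev; [rewrite (even_sub_half _ Hev); ring | lra].
Qed.

End AtLambdaStar.

Theorem lemma22 (n : nat) (a1 a2 a3 : R) :
  (4 <= n)%nat -> 0 < a2 < 1 -> 0 < a3 < 1 -> a1 = 1 - a2 - a3 ->
  let l1 := (INR n - 1 + a1) / INR n in
  let l2 := a2 / INR n in
  let l3 := a3 / INR n in
  sigma1 n l1 l2 l3 <= bound_rhs n /\
  sigma2 n l1 l2 l3 <= bound_rhs n /\
  C0 < 5 / 2.
Proof.
  intros Hn H2 H3 Ha1 l1 l2 l3.
  assert (Hn0 : 0 < INR n) by (apply lt_0_INR; lia).
  assert (E1 : INR n * l1 = INR n - (a2 + a3)) by (unfold l1; subst a1; field; lra).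
  assert (E2 : INR n * l2 = a2) by (unfold l2; field; lra).
  assert (E3 : INR n * l3 = a3) by (unfold l3; field; lra).
  split; [|split].
  - rewrite (sigma1_eq_rsum_row_sum n l1 l2 l3 a2 a3 E1 E2 E3).
    apply rsum_row_sum_le; assumption.
  - rewrite (sigma2_eq_rsum_row_sum n l1 l2 l3 a2 a3 E1 E2 E3).
    apply rsum_row_sum_le; assumption.
  - exact C0_lt_5_2.
Qed.
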